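(* Let $(\mathcal L,\langle\,,\,\rangle)$ be a (right) Leibniz algebra over a field $\mathbf{k}$ (any dimension and characteristic) with basis $X=\{x_j\mid j\in J\}$, and let $k\in\mathbf{k}$ be nonzero. Let $((\hat A,\hat q),\hat i)$ be the free invariant algebra generated by $X$ (constructed as below), extend $\hat i$ linearly to an injective linear map $\mathcal L\to\hat A$, $x\mapsto\hat x$, and let $R$ be the two-sided ideal of $\hat A$ generated by all elements $$\widehat{\langle x,y\rangle}-\hat x\hat y+\hat y\hat x-\hat y\hat q\hat x+\hat x\hat y\hat q-k\hat x\hat q\hat y+k\hat q\hat y\hat x,\qquad x,y\in\mathcal L.$$ Let $\mathcal U:=\hat A/R$, $\bar q:=\hat q+R$, $i(x):=\hat x+R$. Then $((\mathcal U,\bar q),i)$ is the enveloping$^{\langle4\text{-th}\rangle}$ algebra of $(\mathcal L,\langle\,,\,\rangle)$.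
   Context: Right Leibniz algebra: bilinear $\langle\,,\,\rangle$ with $\langle\langle x,y\rangle,z\rangle=\langle x,\langle y,z\rangle\rangle+\langle\langle x,z\rangle,y\rangle$. Invariant algebra: for an associative algebra $A$ (with identity) and idempotent $q$, $(A,q):=\{a\in A\mid qaq=qa\}$; it is a Leibniz algebra $Leib((A,q),\langle\,,\,\rangle_{4,k})$ under $\langle a,b\rangle_{4,k}:=ab-ba+bqa-abq+kaqb-kqba$. Invariant homomorphism $(A,q_A)\to(B,q_B)$: linear, multiplicative, $1_A\mapsto1_B$, $q_A\mapsto q_B$. Free invariant algebra on $X$: $V$ with basis $X\cup\{\tilde q\}$ ($\tilde q\notin X$), $I\subseteq T(V)$ the ideal generated by $\tilde q\otimes\tilde q-\tilde q$ and $\tilde q\otimes a\otimes\tilde q-\tilde q\otimes a$ ($a\in T(V)$), $\hat A=T(V)/I$, $\hat q=\tilde q+I$, $\hat i(x_j)=x_j+I$ (these are linearly independent). An enveloping$^{\langle4\text{-th}\rangle}$ algebra of $\mathcal L$ is a pair $((\mathcal U,\bar q),i)$ with $(\mathcal U,\bar q)$ an invariant algebra and $i:\mathcal L\to(\mathcal U,\bar q)$ such that (i) $i$ is a Leibniz algebra homomorphism $\mathcal L\to Leib((\mathcal U,\bar q),\langle\,,\,\rangle_{4,k})$, i.e. $i(\langle x,y\rangle)=i(x)i(y)-i(y)i(x)+i(y)\bar qi(x)-i(x)i(y)\bar q+ki(x)\bar qi(y)-k\bar qi(y)i(x)$, and (ii) for every invariant algebra $(A,q)$ and every Leibniz homomorphism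 $f:\mathcal L\to Leib((A,q),\langle\,,\,\rangle_{4,k})$ there is a unique invariant homomorphism $f':(\mathcal U,\bar q)\to(A,q)$ with $f=f'\circ i$. *)

From HB Require Import structures.
From mathcomp Require Import all_boot all_order all_algebra.
From Stdlib Require Import ClassicalEpsilon.
Set Implicit Arguments. Unset Strict Implicit. Unset Printing Implicit Defensive.
Import GRing.Theory.
Local Open Scope ring_scope.

Section Defs.
Variable F : fieldType.

Definition right_leibniz (L : lmodType F) (br : L -> L -> L) : Prop :=
  [/\ (forall (a : F) (x y z : L), br (a *: x + y) z = a *: br x z + br y z),
      (forall (a : F) (x y z : L), br x (a *: y + z) = a *: br x y + br x z) &
      (forall x y z : L, br (br x y) z = br x (br y z) + br (br x z) y)].

Definition is_basis (L : lmodType F) (J : eqType) (x : J -> L) : Prop :=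
  (forall v : L, exists (s : seq J) (c : J -> F), v = \sum_(j <- s) c j *: x j) /\
  (forall (s : seq J) (c : J -> F), uniq s ->
      \sum_(j <- s) c j *: x j = 0 -> forall j, j \in s -> c j = 0).

Definition br4 (A : algType F) (k : F) (q : A) (a b : A) : A :=
  a * b - b * a + b * q * a - a * b * q + k *: (a * q * b) - k *: (q * b * a).

Definition inv_mem (A : algType F) (q a : A) : Prop := q * a * q = q * a.

Record algops := AlgOps {
  acar :> Type;
  azero : acar; aone : acar;
  aadd : acar -> acar -> acar; aopp : acar -> acar;
  ascale : F -> acar -> acar; amul : acar -> acar -> acar }.

Definition is_unital_algebra (U : algops) : Prop :=
  let O := azero U in let I := aone U in let add := @aadd U in
  let opp := @aopp U in let sc := @ascale U in let mul := @amul U in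
  (forall a b c, add a (add b c) = add (add a b) c) /\
  (forall a b, add a b = add b a) /\
  (forall a, add O a = a) /\
  (forall a, add (opp a) a = O) /\
  (forall (r s : F) a, sc r (sc s a) = sc (r * s) a) /\
  (forall a, sc 1 a = a) /\
  (forall (r : F) a b, sc r (add a b) = add (sc r a) (sc r b)) /\
  (forall (r s : F) a, sc (r + s) a = add (sc r a) (sc s a)) /\
  (forall a b c, mul a (mul b c) = mul (mul a b) c) /\
  (forall a, mul I a = a) /\ (forall a, mul a I = a) /\
  (forall a b c, mul a (add b c) = add (mul a b) (mul a c)) /\
  (forall a b c, mul (add a b) c = add (mul a c) (mul b c)) /\
  (forall (r : F) a b, sc r (mul a b) = mul (sc r a) b) /\
  (forall (r : F) a b, sc r (mul a b) = mul a (sc r b)).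

Definition br4U (U : algops) (k : F) (q a b : U) : U :=
  let add := @aadd U in let opp := @aopp U in let sc := @ascale U in
  let mul := @amul U in
  add (add (add (add (add (mul a b) (opp (mul b a))) (mul (mul b q) a))
       (opp (mul (mul a b) q))) (sc k (mul (mul a q) b)))
      (opp (sc k (mul (mul q b) a))).

Definition inv_memU (U : algops) (q a : U) : Prop :=
  amul (amul q a) q = amul q a.

Definition inv_hom (U : algops) (qbar : U) (A : algType F) (q : A) (g : U -> A)
  : Prop :=
  [/\ (forall u v, inv_memU qbar u -> inv_memU qbar v -> g (aadd u v) = g u + g v),
      (forall (r : F) u, inv_memU qbar u -> g (ascale r u) = r *: g u),
      (forall u v, inv_memU qbar u -> inv_memU qbar v -> g (amul u v) = g u * g v),
      g (aone U) = 1 /\ g qbar = q &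
      (forall u, inv_memU qbar u -> inv_mem q (g u))].

Definition enveloping4 (L : lmodType F) (br : L -> L -> L) (k : F)
  (U : algops) (qbar : U) (i : L -> U) : Prop :=
  [/\ is_unital_algebra U,
      amul qbar qbar = qbar /\
      (* i is a Leibniz algebra homomorphism L -> Leib((U,qbar),<,>_{4,k}) *)
      (forall v, inv_memU qbar (i v)),
      (forall (a : F) u v, i (a *: u + v) = aadd (ascale a (i u)) (i v)),
      (forall u v, i (br u v) = br4U k qbar (i u) (i v)) &
      (forall (A : algType F) (q : A), q * q = q ->
       forall f : L -> A,
         (forall v, inv_mem q (f v)) ->
         (forall (a : F) u v, f (a *: u + v) = a *: f u + f v) ->
         (forall u v, f (br u v) = br4 k q (f u) (f v)) ->
         exists f' : U -> A,
           [/\ inv_hom qbar q f',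
               (forall v, f v = f' (i v)) &
               (forall g : U -> A, inv_hom qbar q g ->
                  (forall v, f v = g (i v)) ->
                  forall u, inv_memU qbar u -> g u = f' u)])].

(* ---------- Free unital associative algebra T(V), V with basis J + {q~} ---------- *)
(* formal expressions; T(V) is their quotient by the algebra axioms *)
Inductive term (J : Type) : Type :=
| Tgen of J | Tq | Tzero | Tone
| Tadd of term J & term J | Topp of term J
| Tscale of F & term J | Tmul of term J & term J.

Arguments Tq {J}. Arguments Tzero {J}. Arguments Tone {J}.

Inductive cong (J : Type) (E : term J -> term J -> Prop) : term J -> term J -> Prop :=
| c_base a b : E a b -> cong E a b
| c_refl a : cong E a a
| c_sym a b : cong E a b -> cong E b a
| c_trans a b c : cong E a b -> cong E b c -> cong E a c
| c_add a a' b b' : cong E a a' -> cong E b b' -> cong E (Tadd a b) (Tadd a' b')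
| c_opp a a' : cong E a a' -> cong E (Topp a) (Topp a')
| c_scale r a a' : cong E a a' -> cong E (Tscale r a) (Tscale r a')
| c_mul a a' b b' : cong E a a' -> cong E b b' -> cong E (Tmul a b) (Tmul a' b')
| c_addA a b c : cong E (Tadd a (Tadd b c)) (Tadd (Tadd a b) c)
| c_addC a b : cong E (Tadd a b) (Tadd b a)
| c_add0 a : cong E (Tadd Tzero a) a
| c_addN a : cong E (Tadd (Topp a) a) Tzero
| c_scaleA r s a : cong E (Tscale r (Tscale s a)) (Tscale (r * s) a)
| c_scale1 a : cong E (Tscale 1 a) a
| c_scaleDr r a b : cong E (Tscale r (Tadd a b)) (Tadd (Tscale r a) (Tscale r b))
| c_scaleDl r s a : cong E (Tscale (r + s) a) (Tadd (Tscale r a) (Tscale s a))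
| c_mulA a b c : cong E (Tmul a (Tmul b c)) (Tmul (Tmul a b) c)
| c_mul1l a : cong E (Tmul Tone a) a
| c_mul1r a : cong E (Tmul a Tone) a
| c_mulDr a b c : cong E (Tmul a (Tadd b c)) (Tadd (Tmul a b) (Tmul a c))
| c_mulDl a b c : cong E (Tmul (Tadd a b) c) (Tadd (Tmul a c) (Tmul b c))
| c_scaleAl r a b : cong E (Tscale r (Tmul a b)) (Tmul (Tscale r a) b)
| c_scaleAr r a b : cong E (Tscale r (Tmul a b)) (Tmul a (Tscale r b)).

(* generators of the ideal I : q~ q~ - q~ and q~ a q~ - q~ a (a in T(V)) *)
Inductive rel_I (J : Type) : term J -> term J -> Prop :=
| rI_idem : rel_I (Tmul Tq Tq) Tq
| rI_inv a : rel_I (Tmul (Tmul Tq a) Tq) (Tmul Tq a).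

(* the linear extension x |-> x^ of i^(x_j) = x_j, via basis coordinates *)
Definition lincomb (J : Type) (s : seq J) (c : J -> F) : term J :=
  foldr (fun j t => Tadd (Tscale (c j) (Tgen j)) t) Tzero s.

Definition hat (L : lmodType F) (J : eqType) (x : J -> L) (v : L) : term J :=
  let p := epsilon (inhabits (([::] : seq J), (fun _ : J => (0 : F))))
             (fun p : seq J * (J -> F) => v = \sum_(j <- p.1) p.2 j *: x j) in
  lincomb p.1 p.2.

Definition R_gen (L : lmodType F) (br : L -> L -> L) (J : eqType) (x : J -> L)
  (k : F) (u v : L) : term J :=
  let hu := hat x u in let hv := hat x v in
  Tadd (Tadd (Tadd (Tadd (Tadd (Tadd (hat x (br u v))
     (Topp (Tmul hu hv))) (Tmul hv hu)) (Topp (Tmul (Tmul hv Tq) hu)))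
     (Tmul (Tmul hu hv) Tq)) (Topp (Tscale k (Tmul (Tmul hu Tq) hv))))
     (Tscale k (Tmul (Tmul Tq hv) hu)).

(* relations defining U = A^/R = T(V)/(I + R~) *)
Inductive rel_U (L : lmodType F) (br : L -> L -> L) (J : eqType) (x : J -> L)
  (k : F) : term J -> term J -> Prop :=
| rU_I a b : rel_I a b -> rel_U br x k a b
| rU_R u v : rel_U br x k (R_gen br x k u v) Tzero.

Record quot (T : Type) (r : T -> T -> Prop) := Quot {
  qcls : T -> Prop; qclsP : exists t, qcls = r t }.

Definition qpi (T : Type) (r : T -> T -> Prop) (t : T) : quot r :=
  @Quot T r (r t) (ex_intro _ t erefl).

Definition qrepr (T : Type) (r : T -> T -> Prop) (u : quot r) : T :=
  proj1_sig (constructive_indefinite_description _ (qclsP u)).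

Section U.
Variables (L : lmodType F) (br : L -> L -> L) (J : eqType) (x : J -> L) (k : F).
Let r := cong (rel_U br x k).
Let T := quot r.
Let pi := @qpi _ r.
Let rp := @qrepr _ r.

Definition Ualg : algops :=
  @AlgOps T (pi Tzero) (pi Tone)
    (fun a b => pi (Tadd (rp a) (rp b))) (fun a => pi (Topp (rp a)))
    (fun c a => pi (Tscale c (rp a))) (fun a b => pi (Tmul (rp a) (rp b))).

Definition Uqbar : Ualg := pi Tq.
Definition Ui (v : L) : Ualg := pi (hat x v).
End U.

End Defs.

Arguments enveloping4 {F L} br k U qbar i.

(* U is presented by generators and relations: it is the free algebra T(V) on X and
   q~ modulo the congruence generated by the relations of I and the generators of R.
   A map out of U is therefore an evaluation of terms that respects these relations.
   Given f, send x_j to f x_j and q~ to q: the relations of I hold because q is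
   idempotent and every evaluated term lies in (A, q), and the generators of R are
   killed because f is a Leibniz homomorphism.  Uniqueness holds because U is
   generated by q-bar and the classes of the x_j.  Linearity of i comes from the
   uniqueness of coordinates in the basis X. *)

From HB Require Import structures.
From mathcomp Require Import all_boot all_order all_algebra.
From mathcomp Require Import boolp.
From Stdlib Require Import ClassicalEpsilon.
Set Implicit Arguments. Unset Strict Implicit. Unset Printing Implicit Defensive.
Import GRing.Theory.
Local Open Scope ring_scope.

Section Quotient.
Variables (T : Type) (r : T -> T -> Prop).
Hypotheses (r_refl : forall a, r a a) (r_sym : forall a b, r a b -> r b a)
  (r_trans : forall a b c, r a b -> r b c -> r a c).

Lemma quot_ext (u v : quot r) : qcls u = qcls v -> u = v.
Proof.
case: u => cu pu; case: v => cv pv /= E; subst cv.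
by rewrite (Prop_irrelevance pu pv).
Qed.

Lemma qpi_eq a b : r a b -> qpi r a = qpi r b.
Proof.
move=> rab; apply: quot_ext; apply: funext => t /=.
by apply: propext; split=> [/(r_trans (r_sym rab))|/(r_trans rab)].
Qed.

Lemma qcls_repr (u : quot r) : qcls u = r (qrepr u).
Proof. exact: proj2_sig (constructive_indefinite_description _ (qclsP u)). Qed.

Lemma qreprK a : r (qrepr (qpi r a)) a.
Proof. by rewrite -qcls_repr. Qed.

Lemma qpi_repr (u : quot r) : qpi r (qrepr u) = u.
Proof. by apply: quot_ext; rewrite /= -qcls_repr. Qed.
End Quotient.

Section Coordinates.
Variables (F : fieldType) (J : eqType).

Definition seq_coef (s : seq J) (c : J -> F) (j : J) : F := \sum_(i <- s | i == j) c i.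

Lemma sum_seq_coef (V : lmodType F) (g : J -> V) (s u : seq J) (c : J -> F) :
  uniq u -> {subset s <= u} ->
  \sum_(j <- s) c j *: g j = \sum_(j <- u) seq_coef s c j *: g j.
Proof.
move=> uu; elim: s => [|i s IH] sub.
  by rewrite big_nil big1 // => j _; rewrite /seq_coef big_nil scale0r.
rewrite big_cons IH; last by move=> j js; apply: sub; rewrite inE js orbT.
have iu : i \in u by apply: sub; rewrite inE eqxx.
rewrite [RHS](eq_bigr (fun j =>
    (if i == j then c i else 0) *: g j + seq_coef s c j *: g j)); last first.
  move=> j _; rewrite /seq_coef big_cons.
  by case: (i == j); rewrite ?scalerDl ?scale0r ?add0r.
rewrite big_split /=; congr (_ + _).
rewrite (bigD1_seq i) //= eqxx big1 ?addr0 // => j ji.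
by rewrite eq_sym (negbTE ji) scale0r.
Qed.

Lemma scale_add_sum_coef (V : lmodType F) (g : J -> V) (a : F) s1 c1 s2 c2 :
  a *: (\sum_(j <- s1) c1 j *: g j) + \sum_(j <- s2) c2 j *: g j =
  \sum_(j <- undup (s1 ++ s2)) (a * seq_coef s1 c1 j + seq_coef s2 c2 j) *: g j.
Proof.
have uw := undup_uniq (s1 ++ s2).
rewrite (sum_seq_coef g c1 uw) => [|j]; last by rewrite mem_undup mem_cat => ->.
rewrite (sum_seq_coef g c2 uw) => [|j]; last by rewrite mem_undup mem_cat orbC => ->.
rewrite scaler_sumr -big_split; apply: eq_bigr => j _.
by rewrite scalerA scalerDl.
Qed.

Lemma basis_sum_eq (V W : lmodType F) (x : J -> V) (g : J -> W) s1 c1 s2 c2 :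
  is_basis x -> \sum_(j <- s1) c1 j *: x j = \sum_(j <- s2) c2 j *: x j ->
  \sum_(j <- s1) c1 j *: g j = \sum_(j <- s2) c2 j *: g j.
Proof.
move=> [_ xfree] Ex; apply/eqP; rewrite eq_sym -subr_eq0 addrC -scaleN1r.
have : (-1) *: (\sum_(j <- s1) c1 j *: x j) + \sum_(j <- s2) c2 j *: x j = 0.
  by rewrite Ex scaleN1r addNr.
rewrite !scale_add_sum_coef => /(xfree _ _ (undup_uniq _)) coef0.
by rewrite big_seq big1 // => j /coef0 ->; rewrite scale0r.
Qed.

Lemma hat_coords (V : lmodType F) (x : J -> V) (v : V) s c :
  v = \sum_(j <- s) c j *: x j ->
  exists s' c', v = \sum_(j <- s') c' j *: x j /\ hat x v = lincomb s' c'.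
Proof.
move=> Ev; rewrite /hat; set P := fun p : seq J * (J -> F) => _.
set p := ClassicalEpsilon.epsilon _ P.
have Pp : P p by apply: ClassicalEpsilon.epsilon_spec; exists (s, c).
by exists p.1, p.2.
Qed.
End Coordinates.

Lemma alt_sum6_eq0 (V : zmodType) (S m1 m2 m3 m4 m5 m6 : V) :
  S - m1 + m2 - m3 + m4 - m5 + m6 = 0 <-> S = m1 - m2 + m3 - m4 + m5 - m6.
Proof.
have -> : S - m1 + m2 - m3 + m4 - m5 + m6 = S - (m1 - m2 + m3 - m4 + m5 - m6).
  by rewrite !opprD !opprK !addrA.
by split=> [/eqP|->]; rewrite ?subrr // subr_eq0 => /eqP.
Qed.

Section Presentation.
Variables (F : fieldType) (L : lmodType F) (br : L -> L -> L) (J : eqType)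
  (x : J -> L) (k : F).

Local Notation rU := (cong (rel_U br x k)).
Local Notation U := (Ualg br x k).
Local Notation Tzero := (@Tzero F J).
Local Notation Tone := (@Tone F J).
Local Notation Tq := (@Tq F J).
Local Notation Tgen := (@Tgen F J).

Fact Ucl_key : unit. Proof. exact: tt. Qed.
Definition Ucl : term F J -> U := locked_with Ucl_key (qpi rU).

Lemma UclE t : Ucl t = qpi rU t. Proof. by rewrite /Ucl unlock. Qed.

Lemma Ucl_eq a b : rU a b -> Ucl a = Ucl b.
Proof. by rewrite !UclE; apply: qpi_eq; [apply: c_sym | apply: c_trans]. Qed.

Lemma repr_UclK a : rU (qrepr (Ucl a)) a.
Proof. by rewrite UclE; apply: qreprK; apply: c_refl. Qed.

Lemma Ucl_ind (P : U -> Prop) : (forall t, P (Ucl t)) -> forall u, P u.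
Proof. by move=> PUcl u; rewrite -(qpi_repr u) -UclE. Qed.

Lemma UclD a b : Ucl (Tadd a b) = aadd (Ucl a) (Ucl b).
Proof.
transitivity (Ucl (Tadd (qrepr (Ucl a)) (qrepr (Ucl b)))); last by rewrite !UclE.
by apply: Ucl_eq; apply: c_add; apply: c_sym; apply: repr_UclK.
Qed.

Lemma UclN a : Ucl (Topp a) = aopp (Ucl a).
Proof.
transitivity (Ucl (Topp (qrepr (Ucl a)))); last by rewrite !UclE.
by apply: Ucl_eq; apply: c_opp; apply: c_sym; apply: repr_UclK.
Qed.

Lemma UclZ c a : Ucl (Tscale c a) = ascale c (Ucl a).
Proof.
transitivity (Ucl (Tscale c (qrepr (Ucl a)))); last by rewrite !UclE.
by apply: Ucl_eq; apply: c_scale; apply: c_sym; apply: repr_UclK.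
Qed.

Lemma UclM a b : Ucl (Tmul a b) = amul (Ucl a) (Ucl b).
Proof.
transitivity (Ucl (Tmul (qrepr (Ucl a)) (qrepr (Ucl b)))); last by rewrite !UclE.
by apply: Ucl_eq; apply: c_mul; apply: c_sym; apply: repr_UclK.
Qed.

Lemma Ucl0 : Ucl Tzero = azero U. Proof. by rewrite UclE. Qed.
Lemma Ucl1 : Ucl Tone = aone U. Proof. by rewrite UclE. Qed.

Ltac Ucl_intros := match goal with
  | |- forall u : acar _, _ => let t := fresh "t" in elim/Ucl_ind=> t; Ucl_intros
  | |- forall r : _, _ => intro; Ucl_intros
  | _ => idtac end.

Ltac Ucl_law := Ucl_intros; rewrite -?(Ucl0, Ucl1, UclN, UclZ, UclM, UclD);
  apply: Ucl_eq; first [ exact: c_addA | exact: c_addC | exact: c_add0 | exact: c_addN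
  | exact: c_scaleA | exact: c_scale1 | exact: c_scaleDr | exact: c_scaleDl
  | exact: c_mulA | exact: c_mul1l | exact: c_mul1r | exact: c_mulDr | exact: c_mulDl
  | exact: c_scaleAl | exact: c_scaleAr ].

Lemma U_unital_algebra : is_unital_algebra U.
Proof. by rewrite /is_unital_algebra; cbv zeta; repeat split; Ucl_law. Qed.

Definition Ulmod : Type := acar U.
HB.instance Definition _ := gen_eqMixin Ulmod.
HB.instance Definition _ := gen_choiceMixin Ulmod.

Lemma UaddA : associative (@aadd _ U). Proof. by hnf; Ucl_law. Qed.
Lemma UaddC : commutative (@aadd _ U). Proof. by hnf; Ucl_law. Qed.
Lemma Uadd0 : left_id (azero U) (@aadd _ U). Proof. by hnf; Ucl_law. Qed.
Lemma UaddN : left_inverse (azero U) (@aopp _ U) (@aadd _ U). Proof. by hnf; Ucl_law. Qed.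
HB.instance Definition _ := GRing.isZmodule.Build Ulmod UaddA UaddC Uadd0 UaddN.

Lemma UscaleA a b (v : U) : ascale a (ascale b v) = ascale (a * b) v.
Proof. by move: v; Ucl_law. Qed.
Lemma Uscale1 : left_id 1 (@ascale _ U). Proof. by hnf; Ucl_law. Qed.
Lemma UscaleDr : right_distributive (@ascale _ U) (@aadd _ U).
Proof. by hnf; Ucl_law. Qed.
Lemma UscaleDl (v : U) a b : ascale (a + b) v = aadd (ascale a v) (ascale b v).
Proof. by move: v; Ucl_law. Qed.
HB.instance Definition _ :=
  GRing.Zmodule_isLmodule.Build F Ulmod UscaleA Uscale1 UscaleDr UscaleDl.

Lemma Ucl_lincomb s c :
  (Ucl (lincomb s c) : Ulmod) = \sum_(j <- s) c j *: (Ucl (Tgen j) : Ulmod).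
Proof.
elim: s => [|j s IH] /=; first by rewrite big_nil Ucl0.
by rewrite big_cons UclD UclZ IH.
Qed.

Lemma UiE v : Ui br x k v = Ucl (hat x v). Proof. by rewrite UclE. Qed.
Lemma UqbarE : Uqbar br x k = Ucl Tq. Proof. by rewrite UclE. Qed.

Lemma Uqbar_idem : amul (Uqbar br x k) (Uqbar br x k) = Uqbar br x k.
Proof. by rewrite UqbarE -UclM; apply/Ucl_eq/c_base/rU_I/rI_idem. Qed.

Lemma U_inv_mem u : inv_memU (Uqbar br x k) u.
Proof.
elim/Ucl_ind: u => t; rewrite /inv_memU UqbarE -!UclM.
exact/Ucl_eq/c_base/rU_I/rI_inv.
Qed.

Lemma Ui_bracket u v :
  Ui br x k (br u v) = br4U k (Uqbar br x k) (Ui br x k u) (Ui br x k v).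
Proof.
have : Ucl (R_gen br x k u v) = Ucl Tzero by apply/Ucl_eq/c_base/rU_R.
rewrite /R_gen !UclD !UclN !UclZ !UclM Ucl0 -!UiE -UqbarE.
by move=> R0; apply/(@alt_sum6_eq0 Ulmod).
Qed.

Hypothesis xB : is_basis x.

Lemma Ucl_hat v s c : v = \sum_(j <- s) c j *: x j ->
  (Ucl (hat x v) : Ulmod) = \sum_(j <- s) c j *: (Ucl (Tgen j) : Ulmod).
Proof.
move=> Ev; have [s' [c' [Ev' ->]]] := hat_coords Ev.
by rewrite Ucl_lincomb; apply: (basis_sum_eq _ xB); rewrite -Ev -Ev'.
Qed.

Lemma Ui_basis j : Ui br x k (x j) = Ucl (Tgen j).
Proof. by rewrite UiE (@Ucl_hat _ [:: j] (fun=> 1)) ?big_seq1 ?scale1r. Qed.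

Lemma Ui_linear a u v :
  Ui br x k (a *: u + v) = aadd (ascale a (Ui br x k u)) (Ui br x k v).
Proof.
have [[s1 [c1 Eu]] [s2 [c2 Ev]]] := (xB.1 u, xB.1 v).
change ((Ui br x k (a *: u + v) : Ulmod) = a *: (Ui br x k u : Ulmod) + Ui br x k v).
rewrite !UiE (Ucl_hat Eu) (Ucl_hat Ev) scale_add_sum_coef.
by apply: Ucl_hat; rewrite Eu Ev scale_add_sum_coef.
Qed.
End Presentation.

Section Evaluation.
Variables (F : fieldType) (J : Type) (A : algType F) (g : J -> A) (q : A).

Fixpoint eval_term (t : term F J) : A :=
  match t with
  | Tgen j => g j | Tq => q | Tzero => 0 | Tone => 1
  | Tadd a b => eval_term a + eval_term b | Topp a => - eval_term a
  | Tscale c a => c *: eval_term a | Tmul a b => eval_term a * eval_term b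
  end.

Lemma eval_lincomb s c : eval_term (lincomb s c) = \sum_(j <- s) c j *: g j.
Proof. by elim: s => [|j s IH] /=; rewrite ?big_nil ?big_cons ?IH. Qed.

Lemma eval_cong (E : term F J -> term F J -> Prop) :
  (forall a b, E a b -> eval_term a = eval_term b) ->
  forall a b, cong E a b -> eval_term a = eval_term b.
Proof.
move=> evalE a b; elim=> {a b} /= [a b /evalE //|//|a b _ ->|a b c _ -> _ ->
  | a a' b b' _ -> _ -> | a a' _ -> | r a a' _ -> | a a' b b' _ -> _ ->
  |*|*|*|*|*|*|*|*|*|*|*|*|*|*|*] //.
all: first [ exact: addrA | exact: addrC | exact: add0r | exact: addNr
  | exact: scalerA | exact: scale1r | exact: scalerDr | exact: scalerDl
  | exact: mulrA | exact: mul1r | exact: mulr1 | exact: mulrDr | exact: mulrDl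
  | exact: scalerAl | exact: scalerAr ].
Qed.

Lemma eval_unique (h : term F J -> A) :
  (forall j, h (@Tgen F J j) = g j) -> h (@Tq F J) = q -> h (@Tzero F J) = 0 ->
  h (@Tone F J) = 1 -> (forall a b, h (Tadd a b) = h a + h b) ->
  (forall a, h (Topp a) = - h a) -> (forall c a, h (Tscale c a) = c *: h a) ->
  (forall a b, h (Tmul a b) = h a * h b) ->
  forall t, h t = eval_term t.
Proof.
move=> hgen hq h0 h1 hD hN hZ hM.
by elim=> /= [j||||a IHa b IHb|a IHa|c a IHa|a IHa b IHb];
  rewrite ?hgen ?hq ?h0 ?h1 ?hD ?hN ?hZ ?hM ?IHa ?IHb.
Qed.

Hypothesis q_idem : q * q = q.
Hypothesis g_inv : forall j, inv_mem q (g j).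

Lemma eval_inv_mem t : inv_mem q (eval_term t).
Proof.
rewrite /inv_mem; elim: t => [j||||a IHa b IHb|a IHa|c a IHa|a IHa b IHb] /=.
- exact: g_inv.
- by rewrite !q_idem.
- by rewrite mulr0 mul0r.
- by rewrite mulr1 q_idem.
- by rewrite mulrDr mulrDl IHa IHb.
- by rewrite mulrN mulNr IHa.
- by rewrite -scalerAr -scalerAl IHa.
- by rewrite mulrA -IHa -!mulrA [q * (_ * q)]mulrA IHb.
Qed.

Lemma eval_rel_I a b : rel_I a b -> eval_term a = eval_term b.
Proof. by case=> [|t] /=; [rewrite q_idem | exact: eval_inv_mem]. Qed.
End Evaluation.

Section Lift.
Variables (F : fieldType) (L : lmodType F) (br : L -> L -> L) (J : eqType)
  (x : J -> L) (k : F) (A : algType F) (q : A) (f : L -> A).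
Hypotheses (xB : is_basis x) (q_idem : q * q = q)
  (f_inv : forall v, inv_mem q (f v))
  (f_lin : forall a u v, f (a *: u + v) = a *: f u + f v)
  (f_br : forall u v, f (br u v) = br4 k q (f u) (f v)).

Local Notation eval := (eval_term (f \o x) q).
Local Notation qbar := (Uqbar br x k).

Let fx_inv j : inv_mem q ((f \o x) j) := f_inv (x j).

Lemma f_sum s c : f (\sum_(j <- s) c j *: x j) = \sum_(j <- s) c j *: f (x j).
Proof.
have f0 : f 0 = 0.
  have := f_lin 1 0 0; rewrite !scale1r addr0 => f00.
  by apply: (addrI (f 0)); rewrite addr0 -f00.
by elim: s => [|j s IH]; rewrite ?big_nil ?f0 // !big_cons f_lin IH.
Qed.

Lemma eval_hat v : eval (hat x v) = f v.
Proof.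
have [s [c Ev]] := xB.1 v; have [s' [c' [Ev' ->]]] := hat_coords Ev.
by rewrite eval_lincomb Ev' f_sum.
Qed.

Lemma eval_rel_U a b : rel_U br x k a b -> eval a = eval b.
Proof.
case=> [{}a {}b|u v /=]; first exact: (eval_rel_I (g := f \o x) q_idem fx_inv).
by apply/alt_sum6_eq0; rewrite !eval_hat f_br.
Qed.

Definition Ulift (u : Ualg br x k) : A := eval (qrepr u).

Lemma Ulift_Ucl t : Ulift (Ucl br x k t) = eval t.
Proof. exact/(eval_cong eval_rel_U)/repr_UclK. Qed.

Lemma Ulift_inv_hom : inv_hom qbar q Ulift.
Proof.
split=> [u v _ _|r u _|u v _ _||u _].
- by elim/Ucl_ind: u => a; elim/Ucl_ind: v => b; rewrite -UclD !Ulift_Ucl.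
- by elim/Ucl_ind: u => a; rewrite -UclZ !Ulift_Ucl.
- by elim/Ucl_ind: u => a; elim/Ucl_ind: v => b; rewrite -UclM !Ulift_Ucl.
- by rewrite -Ucl1 UqbarE !Ulift_Ucl.
- by elim/Ucl_ind: u => a; rewrite Ulift_Ucl; exact: (eval_inv_mem (g := f \o x) q_idem fx_inv).
Qed.

Lemma Ulift_Ui v : f v = Ulift (Ui br x k v).
Proof. by rewrite UiE Ulift_Ucl eval_hat. Qed.

Lemma Ulift_unique g : inv_hom qbar q g -> (forall v, f v = g (Ui br x k v)) ->
  forall u, inv_memU qbar u -> g u = Ulift u.
Proof.
move=> [gD gZ gM [g1 gq] _] gUi u _; elim/Ucl_ind: u => t; rewrite Ulift_Ucl.
have gD' a b : g (Ucl br x k (Tadd a b)) = g (Ucl br x k a) + g (Ucl br x k b).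
  by rewrite UclD gD //; apply: U_inv_mem.
have g0 : g (Ucl br x k (@Tzero F J)) = 0.
  apply: (addrI (g (Ucl br x k (@Tzero F J)))); rewrite addr0 -gD'.
  by congr g; apply/Ucl_eq/c_add0.
apply: (eval_unique (h := fun t => g (Ucl br x k t))) => [j||||a b|a|c a|a b] //=.
- by rewrite -Ui_basis // -gUi.
- by rewrite -UqbarE.
- by rewrite Ucl1.
- apply/eqP; rewrite -addr_eq0 -gD' -g0; apply/eqP.
  by congr g; apply/Ucl_eq/c_addN.
- by rewrite UclZ gZ //; apply: U_inv_mem.
- by rewrite UclM gM //; apply: U_inv_mem.
Qed.
End Lift.

Unset Implicit Arguments.
Set Strict Implicit.
Theorem proposition5p1 (F : fieldType) (L : lmodType F) (br : L -> L -> L)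
  (J : eqType) (x : J -> L) (k : F) :
  right_leibniz br -> is_basis x -> k != 0 ->
  enveloping4 br k (Ualg br x k) (Uqbar br x k) (Ui br x k).
Proof.
move=> _ xB _; split.
- exact: U_unital_algebra.
- by split; [exact: Uqbar_idem | move=> v; exact: U_inv_mem].
- exact: Ui_linear.
- exact: Ui_bracket.
- move=> A q q_idem f f_inv f_lin f_br; exists (Ulift q f); split.
  + exact: Ulift_inv_hom.
  + exact: Ulift_Ui.
  + exact: Ulift_unique.
Qed.
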